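(* Suppose the neighbor graph $\mathbb N$ (with $m\ge 2$ vertices, no self-arcs) is strongly connected and let $\mathrm D=\{\mathbb E_0,\dots,\mathbb E_p\}$ be an ear decomposition of $\mathbb N$. If for each ear $\mathbb E\in\mathrm D$ the indexed family of subspaces $\{\mathcal K_{ji}:(j,i)\text{ an arc of }\mathbb E\}$ is independent, where $\mathcal K_{ji}=\ker C_{ji}$, then $\bar{\mathbb N}$ is well-configured.
   Context: Setup: there are $m$ agents labeled $1,\dots,m$, each with state $x_i\in\mathbb R^n$. The neighbor graph $\mathbb N$ is a directed graph on vertex set $\{1,\dots,m\}$ without self-arcs; every arc $(j,i)$ is assigned a real matrix $C_{ji}$ with $n$ columns (any number of rows), and $\bar{\mathbb N}$ denotes $\mathbb N$ together with these matrices. $\bar{\mathbb N}$ is called well-configured if for all $x_1,\dots,x_m\in\mathbb R^n$, the conditions $C_{ji}x_i=C_{ji}x_j$ for every arc $(j,i)$ imply $x_1=\cdots=x_m$. A finite indexed family of subspaces $\{\mathcal S_1,\dots,\mathcal S_p\}$ of $\mathbb R^n$ is independent if $\mathcal S_i\cap\sum_{j\ne i}\mathcal S_j=0$ for every $i$. A directed path is a subgraph with distinct vertices $v_0,\dots,v_k$ ($k\ge1$) and arcs $(v_{r-1},v_r)$, $r=1,\dots,k$; its end-vertices are $v_0,v_k$. A directed cycle is a subgraph with distinct vertices $v_1,\dots,v_k$ ($k\ge 2$) and arcs $(v_r,v_{r+1})$, $r<k$, and $(v_k,v_1)$. An ear decomposition of a directed graph $\mathbb G$ (no self-arcs, at least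 two vertices) is a sequence of subgraphs $\mathbb E_0,\dots,\mathbb E_p$ such that $\mathbb E_0$ is a directed cycle, each $\mathbb E_i$ ($i\ge1$) is a directed path or directed cycle, the $\mathbb E_i$ are pairwise arc-disjoint with union $\mathbb G$, and for each $i\ge 1$: if $\mathbb E_i$ is a directed cycle it has exactly one vertex in common with $\bigcup_{k<i}\mathbb E_k$, and if it is a directed path its two end-vertices are the only vertices it has in common with $\bigcup_{k<i}\mathbb E_k$. The sets $\mathbb E_i$ are called ears. *)

From HB Require Import structures.
From mathcomp Require Import all_boot all_order all_algebra.
From mathcomp Require Import reals.
Set Implicit Arguments. Unset Strict Implicit. Unset Printing Implicit Defensive.
Import Order.TTheory GRing.Theory Num.Theory.
Local Open Scope ring_scope.

(* Arcs are pairs (j, i) : 'I_m * 'I_m, meaning an arc from j to i. *)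
Definition subgraph (m : nat) := ({set 'I_m} * {set 'I_m * 'I_m})%type.

(* E is the directed path with distinct vertices v0 :: t (k = size t >= 1),
   arcs (v_{r-1}, v_r); its end-vertices are v0 and last v0 t. *)
Definition dpath_on (m : nat) (E : subgraph m) (v0 : 'I_m) (t : seq 'I_m) : Prop :=
  [/\ (1 <= size t)%N, uniq (v0 :: t),
      E.1 = [set x | x \in v0 :: t] &
      E.2 = [set a | a \in zip (v0 :: t) t]].

Definition is_dpath (m : nat) (E : subgraph m) : Prop :=
  exists v0 t, dpath_on E v0 t.

(* E is the directed cycle with distinct vertices v1 :: t (k = size t + 1 >= 2),
   arcs (v_r, v_{r+1}) and (v_k, v_1). *)
Definition dcycle_on (m : nat) (E : subgraph m) (v1 : 'I_m) (t : seq 'I_m) : Prop :=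
  [/\ (1 <= size t)%N, uniq (v1 :: t),
      E.1 = [set x | x \in v1 :: t] &
      E.2 = [set a | a \in zip (v1 :: t) (rcons t v1)]].

Definition is_dcycle (m : nat) (E : subgraph m) : Prop :=
  exists v1 t, dcycle_on E v1 t.

Definition ear_decomposition (m : nat) (A : {set 'I_m * 'I_m}) (p : nat)
    (D : nat -> subgraph m) : Prop :=
  [/\ is_dcycle (D 0%N),
      (forall i, (1 <= i <= p)%N -> is_dpath (D i) \/ is_dcycle (D i)),
      (forall i k, (i <= p)%N -> (k <= p)%N -> i != k ->
          [disjoint (D i).2 & (D k).2]),
      (\bigcup_(i < p.+1) (D i).1 = [set: 'I_m] /\
       \bigcup_(i < p.+1) (D i).2 = A) &
      (forall i, (1 <= i <= p)%N ->
         let prev := \bigcup_(k < i) (D k).1 in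
         (is_dcycle (D i) -> #|(D i).1 :&: prev| = 1%N) /\
         (forall v0 t, dpath_on (D i) v0 t ->
            (D i).1 :&: prev = [set v0; last v0 t]))].

Definition strongly_connected (m : nat) (A : {set 'I_m * 'I_m}) : Prop :=
  forall u v : 'I_m, connect (fun j i => (j, i) \in A) u v.

Definition Kspace (R : fieldType) (r n : nat) (C : 'M[R]_(r, n))
  : {vspace 'cV[R]_n} := lker (linfun (mulmx C)).

Definition independent_family (R : fieldType) (n : nat) (I : finType)
    (K : I -> {vspace 'cV[R]_n}) (S : {set I}) : Prop :=
  forall a, a \in S -> (K a :&: \sum_(b in S | b != a) K b = 0)%VS.

Definition well_configured (R : fieldType) (m n : nat) (A : {set 'I_m * 'I_m})
    (r : 'I_m -> 'I_m -> nat) (C : forall j i : 'I_m, 'M[R]_(r j i, n)) : Prop :=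
  forall x : 'I_m -> 'cV[R]_n,
    (forall j i, (j, i) \in A -> C j i *m x i = C j i *m x j) ->
    forall i k, x i = x k.

From HB Require Import structures.
From mathcomp Require Import all_boot all_order all_algebra.
From mathcomp Require Import reals.
Set Implicit Arguments. Unset Strict Implicit. Unset Printing Implicit Defensive.
Import GRing.Theory.
Local Open Scope ring_scope.

(* Let x satisfy C_ji x_i = C_ji x_j on every arc.  Along one ear the
   differences x_i - x_j lie in the kernels K_ji and telescope to 0: to x_v1 - x_v1
   on a cycle, and on a path to the difference of the values at its two end-vertices,
   which already agree because both lie on earlier ears.  Independence of the K_ji
   along the ear forces every difference to vanish, so x is constant on the ear, and
   by induction along the decomposition it is constant on all of N. *)

Lemma independent_family_sum_eq0 (R : fieldType) n (I : finType)
    (K : I -> {vspace 'cV[R]_n}) (S : {set I}) (d : I -> 'cV[R]_n) :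
  independent_family K S -> (forall a, a \in S -> d a \in K a) ->
  \sum_(a in S) d a = 0 -> forall a, a \in S -> d a = 0.
Proof.
move=> indK dK sum0 a aS; apply/eqP; rewrite -memv0 -(indK a aS) memv_cap dK //=.
have -> : d a = - \sum_(b in S | b != a) d b.
  by apply/eqP; rewrite -addr_eq0 -(bigD1 a) //= sum0.
by rewrite memvN; apply: memv_sumr => b /andP[bS _]; apply: dK.
Qed.

Lemma telescope_zip_path (V : zmodType) (T : Type) (x : T -> V) v s :
  \sum_(a <- zip (v :: s) s) (x a.2 - x a.1) = x (last v s) - x v.
Proof.
elim: s v => [|y s IHs] v /=; first by rewrite big_nil subrr.
by rewrite big_cons IHs /= addrC addrA subrK.
Qed.

Lemma telescope_zip_rcons (V : zmodType) (T : Type) (x : T -> V) v s w :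
  \sum_(a <- zip (v :: s) (rcons s w)) (x a.2 - x a.1) = x w - x v.
Proof.
elim: s v => [|y s IHs] v /=; first by rewrite big_cons big_nil addr0.
by rewrite big_cons IHs /= addrC addrA subrK.
Qed.

Lemma constant_of_zip_eq (T : eqType) (V : Type) (x : T -> V) v s u :
  (forall a, a \in zip (v :: s) (s ++ u) -> x a.1 = x a.2) ->
  {in v :: s, forall y, x y = x v}.
Proof.
elim: s v => [|y s IHs] v xeq z; first by rewrite inE => /eqP->.
rewrite inE => /orP[/eqP->//|zs].
have -> : x v = x y by apply: (xeq (v, y)); rewrite /= inE eqxx.
by apply: IHs => // a ain; apply: xeq; rewrite /= inE ain orbT.
Qed.

Section ConstantAlongEars.

Variables (R : fieldType) (m n : nat) (A : {set 'I_m * 'I_m}).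
Variables (r : 'I_m -> 'I_m -> nat) (C : forall j i : 'I_m, 'M[R]_(r j i, n)).
Variable x : 'I_m -> 'cV[R]_n.
Hypothesis x_arcs : forall j i, (j, i) \in A -> C j i *m x i = C j i *m x j.

Local Notation K := (fun a : 'I_m * 'I_m => Kspace (C a.1 a.2)).

Lemma arc_diff_in_Kspace a : a \in A -> x a.2 - x a.1 \in K a.
Proof.
by case: a => j i aA; rewrite /Kspace memv_ker lfunE /= mulmxBr x_arcs ?subrr.
Qed.

Lemma eq_on_independent_arcs (S : {set 'I_m * 'I_m}) (l : seq ('I_m * 'I_m)) :
  uniq l -> S = [set a | a \in l] -> {subset S <= A} -> independent_family K S ->
  \sum_(a <- l) (x a.2 - x a.1) = 0 -> forall a, a \in l -> x a.1 = x a.2.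
Proof.
move=> ul defS SA indS sum0 a al.
have aS : a \in S by rewrite defS inE.
apply/eqP; rewrite eq_sym -subr_eq0; apply/eqP.
apply: (independent_family_sum_eq0 (d := fun a => x a.2 - x a.1) indS) => //.
  by move=> b bS; apply/arc_diff_in_Kspace/SA.
by rewrite -[RHS]sum0 (big_uniq _ ul); apply: eq_bigl => b; rewrite defS inE.
Qed.

Lemma dcycle_constant (E : subgraph m) w t :
  dcycle_on E w t -> {subset E.2 <= A} -> independent_family K E.2 ->
  {in E.1, forall y, x y = x w}.
Proof.
case=> _ uwt -> defE2 EA indE y; rewrite inE.
apply: (@constant_of_zip_eq _ _ x w t [:: w]); rewrite cats1.
apply: (eq_on_independent_arcs (zip_uniql _ uwt) defE2 EA indE).
by rewrite telescope_zip_rcons subrr.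
Qed.

Lemma dpath_constant (E : subgraph m) v t :
  dpath_on E v t -> {subset E.2 <= A} -> independent_family K E.2 ->
  x (last v t) = x v -> {in E.1, forall y, x y = x v}.
Proof.
case=> _ uvt -> defE2 EA indE ends_eq y; rewrite inE.
apply: (@constant_of_zip_eq _ _ x v t [::]); rewrite cats0.
apply: (eq_on_independent_arcs (zip_uniql _ uvt) defE2 EA indE).
by rewrite telescope_zip_path ends_eq subrr.
Qed.

Lemma ear_constant (E : subgraph m) (P : {set 'I_m}) c :
  is_dpath E \/ is_dcycle E ->
  (is_dcycle E -> #|E.1 :&: P| = 1%N) ->
  (forall v0 t, dpath_on E v0 t -> E.1 :&: P = [set v0; last v0 t]) ->
  {subset E.2 <= A} -> independent_family K E.2 ->
  {in P, forall y, x y = c} -> {in E.1, forall y, x y = c}.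
Proof.
move=> [[v [t Ev]]|[w [t Ew]]] cyc_attach path_attach EA indE xP y yE.
  have /setIP[_ vP] : v \in E.1 :&: P by rewrite (path_attach _ _ Ev) !inE eqxx.
  have /setIP[_ lP] : last v t \in E.1 :&: P.
    by rewrite (path_attach _ _ Ev) !inE eqxx orbT.
  by rewrite (dpath_constant Ev EA indE) ?xP // (xP _ lP).
have /card_gt0P[z /setIP[zE zP]] : (0 < #|E.1 :&: P|)%N.
  by rewrite cyc_attach //; exists w, t.
by rewrite (dcycle_constant Ew EA indE yE) -(dcycle_constant Ew EA indE zE) xP.
Qed.

Lemma ear_decomposition_constant p D :
  ear_decomposition A p D ->
  (forall e, (e <= p)%N -> independent_family K (D e).2) ->
  forall i k, x i = x k.
Proof.
case=> [[v1 [t1 cyc0]] ears _ [cover arcsD] attach] indD.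
have DA e : (e <= p)%N -> {subset (D e).2 <= A}.
  move=> ep a ae; rewrite -arcsD; apply/bigcupP.
  by exists (Ordinal (ep : (e < p.+1)%N)).
have prefix e :
    (e <= p)%N -> {in \bigcup_(k < e.+1) (D k).1, forall y, x y = x v1}.
  elim: e => [|e IHe] ep.
    move=> y; rewrite big_ord1.
    exact: (dcycle_constant cyc0 (DA 0%N ep) (indD 0%N ep)).
  have ep1 : (1 <= e.+1 <= p)%N by rewrite ep.
  have [cyc_attach path_attach] := attach _ ep1.
  move=> y; rewrite big_ord_recr /= inE => /orP[]; first exact: IHe (ltnW ep) y.
  exact: ear_constant (ears _ ep1) cyc_attach path_attach (DA _ ep) (indD _ ep)
    (IHe (ltnW ep)) y.
by move=> i k; rewrite !(prefix p) // cover inE.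
Qed.

End ConstantAlongEars.

Theorem theorem1 (R : realType) (m n : nat) (A : {set 'I_m * 'I_m})
    (r : 'I_m -> 'I_m -> nat) (C : forall j i : 'I_m, 'M[R]_(r j i, n))
    (p : nat) (D : nat -> subgraph m) :
  (2 <= m)%N ->
  (forall a, a \in A -> a.1 != a.2) ->
  strongly_connected A ->
  ear_decomposition A p D ->
  (forall e, (e <= p)%N ->
     independent_family (fun a : 'I_m * 'I_m => Kspace (C a.1 a.2)) (D e).2) ->
  well_configured A C.
Proof.
move=> _ _ _ earD indD x x_arcs.
exact: (@ear_decomposition_constant R m n A r C x x_arcs p D earD indD).
Qed.
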